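(* Let $Q=[u_1,u_2,u_3,u_4,u_5,u_6]\subset\mathbb{S}^2$ be a spherical polygon not contained in any closed hemisphere and without self-intersections and antipodal intersections. Then $Q$ has 6 inflections.
   Context: A spherical polygon $Q=[u_1,\dots,u_n]$ has edges the minimal great-circle arcs from $u_i$ to $u_{i+1}$ (indices mod $n$). Standing assumption: no three vertices lie on a common great circle. A self-intersection is a pair of non-adjacent edges that intersect; an antipodal intersection is a pair of non-adjacent edges $e,f$ with $e\cap(-f)\ne\emptyset$. With $[a,b,c]$ the determinant, $\{u_i,u_{i+1}\}$ is an inflection if $[u_{i-1},u_i,u_{i+1}]$ and $[u_i,u_{i+1},u_{i+2}]$ have opposite signs. *)

From HB Require Import structures.
From mathcomp Require Import all_boot all_order all_algebra.
From mathcomp Require Import reals.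
Set Implicit Arguments. Unset Strict Implicit. Unset Printing Implicit Defensive.
Import Order.TTheory GRing.Theory Num.Theory.
Local Open Scope ring_scope.

Section Spherical.
Variable R : realType.

Definition dotv (x y : 'rV[R]_3) : R := (x *m y^T) 0 0.

Definition on_sphere (x : 'rV[R]_3) : Prop := dotv x x = 1.

Definition det3 (a b c : 'rV[R]_3) : R :=
  \det (\matrix_(i < 3, j < 3)
          (if i == 0 :> nat then a 0 j else if i == 1 :> nat then b 0 j else c 0 j)).

(* The minimal great-circle arc from a to b (a, b on S^2, not antipodal):
   the unit vectors that are nonnegative combinations of a and b. *)
Definition arc (a b : 'rV[R]_3) (x : 'rV[R]_3) : Prop :=
  on_sphere x /\ exists l m : R, 0 <= l /\ 0 <= m /\ x = l *: a + m *: b.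

Variable n : nat.
Implicit Types (u : 'I_n -> 'rV[R]_3) (i j k : 'I_n).

(* Polygon Q = [u_0, ..., u_{n-1}], indices mod n. *)
Definition sphere_polygon u : Prop := forall i, on_sphere (u i).

(* Standing assumption: no three vertices on a common great circle. *)
Definition general_position u : Prop :=
  forall i j k, i != j -> j != k -> i != k -> det3 (u i) (u j) (u k) != 0.

Definition edge u i (x : 'rV[R]_3) : Prop := arc (u i) (u (ordS i)) x.

Definition adjacent_edges i j : bool := [|| i == j, j == ordS i | i == ordS j].

Definition has_self_intersection u : Prop :=
  exists i j, ~~ adjacent_edges i j /\ exists x, edge u i x /\ edge u j x.

Definition has_antipodal_intersection u : Prop :=
  exists i j, ~~ adjacent_edges i j /\ exists x, edge u i x /\ edge u j (- x).

Definition in_closed_hemisphere u : Prop :=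
  exists v : 'rV[R]_3, v != 0 /\ forall i, 0 <= dotv v (u i).

Definition opposite_signs (a b : R) : bool := ((a < 0) && (0 < b)) || ((0 < a) && (b < 0)).

Definition inflection u i : bool :=
  opposite_signs (det3 (u (ord_pred i)) (u i) (u (ordS i)))
                 (det3 (u i) (u (ordS i)) (u (ordS (ordS i)))).

Definition num_inflections u : nat := #|[set i | inflection u i]|.

End Spherical.

From Pilot Require Import Defs.
From HB Require Import structures.
From mathcomp Require Import all_boot all_order all_algebra.
From mathcomp Require Import reals ring lra zify.
Set Implicit Arguments. Unset Strict Implicit. Unset Printing Implicit Defensive.
Import Order.TTheory GRing.Theory Num.Theory.

(* Inflections depend only on the chirotope of the hexagon, i.e. on the signs
   of the 20 determinants [u_i, u_j, u_k], i < j < k.  These signs satisfy the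
   three-term Grassmann-Pluecker relations; not lying in a closed hemisphere
   means that every great circle through two vertices has vertices strictly on
   both sides; and if two non-adjacent edges each separated the endpoints of
   the other, the edges would meet or meet antipodally.  A finite, reflexively
   checked case analysis over sign patterns shows that these constraints force
   all six pairs of consecutive orientations to differ. *)

(** * Propositional formulas and a certified refutation search *)

Inductive bform :=
  | FTrue | FFalse | FVar of nat | FNot of bform
  | FAnd of bform & bform | FOr of bform & bform.

Fixpoint eval (s : nat -> bool) (f : bform) : bool :=
  match f with
  | FTrue => true
  | FFalse => false
  | FVar m => s m
  | FNot g => ~~ eval s g
  | FAnd g h => eval s g && eval s h
  | FOr g h => eval s g || eval s h
  end.

Definition FXor (f g : bform) : bform := FOr (FAnd f (FNot g)) (FAnd (FNot f) g).
Definition andF (fs : seq bform) : bform := foldr FAnd FTrue fs.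
Definition orF (fs : seq bform) : bform := foldr FOr FFalse fs.
Definition not_all_equal (f g h : bform) : bform :=
  FAnd (FOr f (FOr g h)) (FNot (FAnd f (FAnd g h))).

Lemma eval_FNot s f : eval s (FNot f) = ~~ eval s f.
Proof. by []. Qed.

Lemma eval_FAnd s f g : eval s (FAnd f g) = eval s f && eval s g.
Proof. by []. Qed.

Lemma eval_not_all_equal s f g h : eval s (not_all_equal f g h) =
  [|| eval s f, eval s g | eval s h] && ~~ [&& eval s f, eval s g & eval s h].
Proof. by []. Qed.

Lemma eval_FXor s f g : eval s (FXor f g) = (eval s f != eval s g).
Proof. by rewrite /FXor /=; case: (eval s f); case: (eval s g). Qed.

Lemma eval_andF s fs : eval s (andF fs) = all (eval s) fs.
Proof. by elim: fs => //= f fs <-. Qed.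

Lemma eval_orF s fs : eval s (orF fs) = has (eval s) fs.
Proof. by elim: fs => //= f fs <-. Qed.

(* Kleene evaluation when only the first [size p] variables are assigned. *)
Fixpoint peval (p : seq bool) (f : bform) : option bool :=
  match f with
  | FTrue => Some true
  | FFalse => Some false
  | FVar m => if m < size p then Some (nth false p m) else None
  | FNot g => omap negb (peval p g)
  | FAnd g h =>
      match peval p g, peval p h with
      | Some false, _ | _, Some false => Some false
      | Some true, Some true => Some true
      | _, _ => None
      end
  | FOr g h =>
      match peval p g, peval p h with
      | Some true, _ | _, Some true => Some true
      | Some false, Some false => Some false
      | _, _ => None
      end
  end.

Lemma peval_mkseq s k f b : peval (mkseq s k) f = Some b -> eval s f = b.
Proof.
elim: f b => [||m|g IHg|g IHg h IHh|g IHg h IHh] b /=; [by case | by case | | | |].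
- by rewrite size_mkseq; case: ifP => // hm [<-]; rewrite nth_mkseq.
- by case Eg: (peval (mkseq s k) g) => [c|] //= [<-]; rewrite (IHg c).
- case Eg: (peval (mkseq s k) g) => [[]|]; case Eh: (peval (mkseq s k) h) => [[]|] //= [<-];
    by rewrite ?(IHg _ Eg) ?(IHh _ Eh) ?andbF.
- case Eg: (peval (mkseq s k) g) => [[]|]; case Eh: (peval (mkseq s k) h) => [[]|] //= [<-];
    by rewrite ?(IHg _ Eg) ?(IHh _ Eh) ?orbT.
Qed.

Definition falsified (p : seq bool) (fs : seq bform) : bool :=
  has (fun f => peval p f == Some false) fs.

(* The explicit [if]s keep the search lazy under [vm_compute]. *)
Fixpoint refutes (d : nat) (fs : seq bform) (p : seq bool) : bool :=
  if falsified p fs then true else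
  if d is d'.+1 then
    if refutes d' fs (rcons p true) then refutes d' fs (rcons p false) else false
  else false.

Lemma falsified_mkseq s k fs : falsified (mkseq s k) fs -> ~~ all (eval s) fs.
Proof.
elim: fs => //= f fs IH /orP [/eqP /peval_mkseq -> // | /IH /negbTE ->].
by rewrite andbF.
Qed.

Lemma refutes_mkseq d fs s k : refutes d fs (mkseq s k) -> ~~ all (eval s) fs.
Proof.
elim: d k => [|d IHd] k /=; case: ifP => [/falsified_mkseq //|_] //.
case: ifP => // ht hf; apply: (IHd k.+1); rewrite mkseqS; by case: (s k).
Qed.

(** * Sign constraints on the chirotope of a polygon, as formulas *)

Definition above (n i : nat) : seq nat := iota i.+1 (n - i.+1).

Lemma mem_above n i j : (j \in above n i) = (i < j < n).
Proof. rewrite mem_iota; lia. Qed.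

Definition extend_incr (T : Type) (n : nat) (ts : seq (T * nat)) : seq (T * nat * nat) :=
  [seq (t, k) | t <- ts, k <- above n t.2].

Lemma mem_extend_incr (T : eqType) n (ts : seq (T * nat)) t k :
  ((t, k) \in extend_incr n ts) = (t \in ts) && (t.2 < k < n).
Proof.
apply/allpairsPdep/andP => [[t' [k' [t'_in k'_in [-> ->]]]] | [t_in k_in]].
  by rewrite -mem_above.
by exists t, k; rewrite mem_above.
Qed.

Definition incr_pairs (n : nat) : seq (nat * nat) := [seq (i, j) | i <- iota 0 n, j <- above n i].
Definition incr_triples (n : nat) := extend_incr n (incr_pairs n).
Definition incr_quadruples (n : nat) := extend_incr n (incr_triples n).

Lemma mem_incr_pairs n i j : ((i, j) \in incr_pairs n) = (i < j < n).
Proof.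
apply/allpairsPdep/idP => [[i' [j' [_ j'_in [-> ->]]]] | ij].
  by rewrite -mem_above.
by exists i, j; rewrite mem_iota mem_above; split => //; lia.
Qed.

Definition next_vertex (n i : nat) : nat := i.+1 %% n.
Definition prev_vertex (n i : nat) : nat := (i + n).-1 %% n.

Lemma next_vertex_cases n i : i < n ->
  (i.+1 < n /\ next_vertex n i = i.+1) \/ (i.+1 = n /\ next_vertex n i = 0).
Proof.
rewrite /next_vertex => hi; case: (ltngtP i.+1 n) => [lt_in | gt_in | eq_in].
- by left; rewrite modn_small.
- lia.
- by right; rewrite eq_in modnn.
Qed.

Lemma prev_vertex_cases n i : i < n ->
  (0 < i /\ prev_vertex n i = i.-1) \/ (i = 0 /\ prev_vertex n i = n.-1).
Proof.
rewrite /prev_vertex; case: i => [|i] hi.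
  by right; split => //; rewrite add0n modn_small //; lia.
by left; split => //; rewrite addSn /= modnDr modn_small // ltnW.
Qed.

Lemma val_ordS n (i : 'I_n) : ordS i = next_vertex n i :> nat.
Proof. by []. Qed.

Lemma val_ord_pred n (i : 'I_n) : ord_pred i = prev_vertex n i :> nat.
Proof. by []. Qed.

Definition adjacent (n i j : nat) : bool :=
  [|| i == j, j == next_vertex n i | i == next_vertex n j].

(* Variable number [m] stands for the orientation of the [m]-th increasing
   triple of vertices. *)
Definition orient_var (n i j k : nat) : bform := FVar (index (i, j, k) (incr_triples n)).

Definition orient_form (n i j k : nat) : bform :=
  if i < j then
    if j < k then orient_var n i j k
    else if i < k then FNot (orient_var n i k j) else orient_var n k i j
  else
    if i < k then FNot (orient_var n j i k)
    else if j < k then orient_var n j k i else FNot (orient_var n k j i).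

Definition hemisphere_form (n p q : nat) : bform :=
  let others := [seq x <- iota 0 n | x \notin [:: p; q]] in
  FAnd (orF [seq orient_form n p q x | x <- others])
       (orF [seq FNot (orient_form n p q x) | x <- others]).

Definition hemisphere_forms (n : nat) : seq bform :=
  [seq hemisphere_form n p q | p <- iota 0 n, q <- above n p].

Definition separates (n i j : nat) : bform :=
  FXor (orient_form n i (next_vertex n i) j) (orient_form n i (next_vertex n i) (next_vertex n j)).

Definition crossing_form (n i j : nat) : bform := FNot (FAnd (separates n i j) (separates n j i)).

Definition crossing_forms (n : nat) : seq bform :=
  [seq crossing_form n ij.1 ij.2
  | ij <- [seq (i, j) | i <- iota 0 n, j <- iota 0 n] & ~~ adjacent n ij.1 ij.2].

Definition plucker_form (n a b c d e : nat) : bform :=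
  let o := orient_form n a in
  not_all_equal (FNot (FXor (o b c) (o d e))) (FXor (o b d) (o c e)) (FNot (FXor (o b e) (o c d))).

Definition plucker_forms (n : nat) : seq bform :=
  [seq (let: (b, c, d, e) := bcde in plucker_form n a b c d e)
  | bcde <- incr_quadruples n,
    a <- [seq x <- iota 0 n | let: (b, c, d, e) := bcde in x \notin [:: b; c; d; e]]].

Definition edge_inflection_form (n i : nat) : bform :=
  FXor (orient_form n (prev_vertex n i) i (next_vertex n i))
       (orient_form n i (next_vertex n i) (next_vertex n (next_vertex n i))).

Definition inflection_form (n : nat) : bform := andF [seq edge_inflection_form n i | i <- iota 0 n].

Definition hexagon_forms : seq bform :=
  hemisphere_forms 6 ++ crossing_forms 6 ++ plucker_forms 6 ++ [:: FNot (inflection_form 6)].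

Lemma hexagon_forms_refuted : refutes (size (incr_triples 6)) hexagon_forms [::].
Proof. vm_compute; reflexivity. Qed.

(** * Determinants and great-circle arcs *)

Section Signs.
Local Open Scope ring_scope.
Variable R : realDomainType.
Implicit Types x y z : R.

Lemma lt0_neq0E x : x != 0 -> (x < 0) = ~~ (0 < x).
Proof. by move=> x0; rewrite ltNge le_eqVlt eq_sym (negbTE x0). Qed.

Lemma mul_gt0E x y : x != 0 -> y != 0 -> (0 < x * y) = ((0 < x) == (0 < y)).
Proof.
move=> x0 y0; case: (boolP (0 < x)) => [x_gt0 | x_le0]; first by rewrite pmulr_rgt0.
by rewrite nmulr_rgt0 ?lt0_neq0E.
Qed.

Lemma mul_lt0E x y : x != 0 -> y != 0 -> (x * y < 0) = ((0 < x) != (0 < y)).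
Proof. by move=> x0 y0; rewrite lt0_neq0E ?mulf_neq0 // mul_gt0E. Qed.

Lemma sum3_eq0_signs x y z : x + y + z = 0 -> x != 0 -> y != 0 -> z != 0 ->
  [|| 0 < x, 0 < y | 0 < z] && ~~ [&& 0 < x, 0 < y & 0 < z].
Proof.
move=> xyz; rewrite !neq_lt => /orP[] hx /orP[] hy /orP[] hz;
  rewrite ?hx ?hy ?hz ?(lt_gtF hx) ?(lt_gtF hy) ?(lt_gtF hz) //; lra.
Qed.

End Signs.

Section Vectors.
Local Open Scope ring_scope.
Variable R : realType.
Implicit Types (a b c d e p q r s w y : 'rV[R]_3) (l m A B : R).

Definition coord w k := w 0 (inord k).

Lemma coordE w (j : 'I_3) : w 0 j = coord w j.
Proof. by rewrite /coord inord_val. Qed.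

Lemma coordD w y k : coord (w + y) k = coord w k + coord y k.
Proof. by rewrite /coord mxE. Qed.

Lemma coordN w k : coord (- w) k = - coord w k.
Proof. by rewrite /coord mxE. Qed.

Lemma coordZ l w k : coord (l *: w) k = l * coord w k.
Proof. by rewrite /coord mxE. Qed.

Lemma coord0 k : coord (0 : 'rV[R]_3) k = 0.
Proof. by rewrite /coord mxE. Qed.

Lemma row3P w y :
  coord w 0 = coord y 0 -> coord w 1 = coord y 1 -> coord w 2 = coord y 2 -> w = y.
Proof. by move=> h0 h1 h2; apply/rowP => -[[|[|[|j]]] hj]; rewrite !coordE. Qed.

Lemma dotvE w y : dotv w y = coord w 0 * coord y 0 + coord w 1 * coord y 1 + coord w 2 * coord y 2.
Proof.
rewrite /dotv !mxE !big_ord_recl big_ord0 !mxE !coordE.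
change (bump 0 0) with 1%N; change (bump 0 1) with 2%N.
by rewrite /=; ring.
Qed.

Lemma dotvNl w y : dotv (- w) y = - dotv w y.
Proof. by rewrite /dotv mulNmx mxE. Qed.

Lemma det3E a b c : det3 a b c =
    coord a 0 * (coord b 1 * coord c 2 - coord b 2 * coord c 1)
  - coord a 1 * (coord b 0 * coord c 2 - coord b 2 * coord c 0)
  + coord a 2 * (coord b 0 * coord c 1 - coord b 1 * coord c 0).
Proof.
rewrite /det3 (expand_det_row _ 0) !big_ord_recl big_ord0 /cofactor.
rewrite !(expand_det_row _ 0) !big_ord_recl !big_ord0 /cofactor !det_mx11.
rewrite !mxE /= !coordE.
do 2 (change (bump 0 0) with 1%N; change (bump 0 1) with 2%N;
  change (bump 1 0) with 0%N; change (bump 1 1) with 2%N;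
  change (bump 2 0) with 0%N; change (bump 2 1) with 1%N).
by rewrite /=; ring.
Qed.

Lemma det3_swapl a b c : det3 b a c = - det3 a b c.
Proof. rewrite !det3E; ring. Qed.

Lemma det3_swapr a b c : det3 a c b = - det3 a b c.
Proof. rewrite !det3E; ring. Qed.

Lemma det3_rot a b c : det3 b c a = det3 a b c.
Proof. rewrite !det3E; ring. Qed.

Lemma det3_dup13 a b : det3 a b a = 0.
Proof. rewrite !det3E; ring. Qed.

Lemma det3_dup23 a b : det3 a b b = 0.
Proof. rewrite !det3E; ring. Qed.

Lemma det3_plucker a b c d e :
  det3 a b c * det3 a d e - det3 a b d * det3 a c e + det3 a b e * det3 a c d = 0.
Proof. rewrite !det3E; ring. Qed.

Definition crossv p q : 'rV[R]_3 :=
  \row_(j < 3) [:: coord p 1 * coord q 2 - coord p 2 * coord q 1;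
                  coord p 2 * coord q 0 - coord p 0 * coord q 2;
                  coord p 0 * coord q 1 - coord p 1 * coord q 0]`_j.

Lemma dotv_crossv p q y : dotv (crossv p q) y = det3 p q y.
Proof. by rewrite dotvE det3E /crossv /coord !mxE !inordK //=; ring. Qed.

Definition orient a b c : bool := 0 < det3 a b c.

Lemma orient_swapl a b c : det3 a b c != 0 -> orient b a c = ~~ orient a b c.
Proof. by move=> abc; rewrite /orient det3_swapl oppr_gt0 lt0_neq0E. Qed.

Lemma orient_swapr a b c : det3 a b c != 0 -> orient a c b = ~~ orient a b c.
Proof. by move=> abc; rewrite /orient det3_swapr oppr_gt0 lt0_neq0E. Qed.

Lemma orient_rotl a b c : orient b c a = orient a b c.
Proof. by rewrite /orient det3_rot. Qed.

Lemma orient_rotr a b c : orient c a b = orient a b c.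
Proof. by rewrite /orient -det3_rot. Qed.

Lemma orient_rev a b c : det3 a b c != 0 -> orient c b a = ~~ orient a b c.
Proof. by move=> abc; rewrite orient_rotl orient_swapr. Qed.

Lemma opposite_signsE l m : l != 0 -> m != 0 -> opposite_signs l m = ((0 < l) != (0 < m)).
Proof.
move=> l0 m0; rewrite /opposite_signs !lt0_neq0E //.
by case: (0 < l); case: (0 < m).
Qed.

Definition normalize w : 'rV[R]_3 := (Num.sqrt (dotv w w))^-1 *: w.

Lemma dotvv_gt0 w : w != 0 -> 0 < dotv w w.
Proof.
move=> w0; rewrite lt_neqAle dotvE; apply/andP; split; last by nra.
apply: contra w0 => /eqP ww0; apply/eqP/row3P; rewrite coord0; nra.
Qed.

Lemma on_sphere_normalize w : w != 0 -> on_sphere (normalize w).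
Proof.
move=> w0; have ww := dotvv_gt0 w0.
rewrite /on_sphere /normalize (_ : dotv _ _ = (Num.sqrt (dotv w w))^-1 ^+ 2 * dotv w w).
  by rewrite exprVn sqr_sqrtr ?ltW // mulVf ?gt_eqF.
by rewrite !dotvE !coordZ; ring.
Qed.

Lemma normalizeN w : normalize (- w) = - normalize w.
Proof.
by rewrite /normalize scalerN (_ : dotv (- w) (- w) = dotv w w) // !dotvE !coordN; ring.
Qed.

Lemma arc_normalize p q l m : 0 <= l -> 0 <= m -> l *: p + m *: q != 0 ->
  Defs.arc p q (normalize (l *: p + m *: q)).
Proof.
move=> l0 m0 w0; split; first exact: on_sphere_normalize.
rewrite /normalize; set k := (Num.sqrt _)^-1.
have k0 : 0 <= k by rewrite invr_ge0 sqrtr_ge0.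
by exists (k * l), (k * m); rewrite !mulr_ge0 // scalerDr !scalerA.
Qed.

Lemma arc_normalize_or_opp p q A B : A * B < 0 -> A *: q - B *: p != 0 ->
  Defs.arc p q (normalize (A *: q - B *: p)) \/ Defs.arc p q (- normalize (A *: q - B *: p)).
Proof.
move=> AB w0; case: (ltP 0 A) => A0.
  left; have -> : A *: q - B *: p = (- B) *: p + A *: q by rewrite scaleNr addrC.
  by apply: arc_normalize; [nra | exact: ltW | rewrite scaleNr addrC].
right; rewrite -normalizeN opprB.
have -> : B *: p - A *: q = B *: p + (- A) *: q by rewrite scaleNr.
by apply: arc_normalize; [nra | lra | rewrite scaleNr -opprB oppr_eq0].
Qed.

(* The point [A q - B p] with [A = [r,s,p]], [B = [r,s,q]] lies on both great
   circles, since it also equals [E r - C s] with [C = [p,q,r]], [E = [p,q,s]]. *)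
Lemma separated_arcs_meet p q r s :
  det3 r s p * det3 r s q < 0 -> det3 p q r * det3 p q s < 0 ->
  (exists x, Defs.arc p q x /\ Defs.arc r s x) \/ (exists x, Defs.arc p q x /\ Defs.arc r s (- x)).
Proof.
set A := det3 r s p; set B := det3 r s q; set C := det3 p q r; set E := det3 p q s.
move=> AB CE.
have w_eq : A *: q - B *: p = (- C) *: s - (- E) *: r.
  by apply: row3P; rewrite !(coordD, coordN, coordZ) /A /B /C /E !det3E; ring.
have A0 : A != 0 by apply: contraTneq AB => ->; rewrite mul0r ltxx.
have E0 : E != 0 by apply: contraTneq CE => ->; rewrite mulr0 ltxx.
have w0 : A *: q - B *: p != 0.
  have det_w : det3 (A *: q - B *: p) s p = E * A.
    by rewrite w_eq /A /E !det3E !(coordD, coordN, coordZ); ring.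
  apply: contra_neq (mulf_neq0 E0 A0) => w0.
  by rewrite -det_w w0 det3E !coord0; ring.
have CE' : (- C) * (- E) < 0 by rewrite mulrNN; exact: CE.
have w0' : (- C) *: s - (- E) *: r != 0 by rewrite -w_eq.
have := arc_normalize_or_opp CE' w0'; rewrite -w_eq.
set x := normalize _.
case: (arc_normalize_or_opp AB w0) => pq_x [rs_x | rs_x].
- by left; exists x.
- by right; exists x.
- by right; exists (- x); rewrite opprK.
- by left; exists (- x).
Qed.

Lemma not_in_hemisphere_orient n (u : 'I_n -> 'rV[R]_3) a b (pos : bool) :
  ~ in_closed_hemisphere u -> crossv a b != 0 ->
  exists i, orient a b (u i) = pos /\ det3 a b (u i) != 0.
Proof.
move=> not_hemi ab0.
pose w := if pos then - crossv a b else crossv a b.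
have [i w_i] : exists i, dotv w (u i) < 0.
  case: (boolP [exists i, dotv w (u i) < 0]) => [/existsP // | /existsPn w_ge0].
  exfalso; apply: not_hemi; exists w; split => [|i]; first by rewrite /w; case: (pos); rewrite ?oppr_eq0.
  by rewrite leNgt w_ge0.
exists i; move: w_i; rewrite /w {w} /orient; case: pos; rewrite ?dotvNl ?oppr_lt0 dotv_crossv.
  by move=> pos_i; rewrite pos_i gt_eqF.
by move=> neg_i; rewrite lt_gtF ?lt_eqF.
Qed.

End Vectors.

(** * The constraints hold for every polygon in general position *)

Section PolygonChirotope.
Variables (R : realType) (n : nat) (u : 'I_n.+1 -> 'rV[R]_3).
Hypothesis u_gp : general_position u.

Definition vertex (i : nat) : 'rV[R]_3 := u (inord i).

Definition chirotope (m : nat) : bool :=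
  let: (i, j, k) := nth (0, 0, 0)%N (incr_triples n.+1) m in
  orient (vertex i) (vertex j) (vertex k).

Lemma vertex_ord (i : 'I_n.+1) : vertex i = u i.
Proof. by rewrite /vertex inord_val. Qed.

Lemma ordS_inord i : i < n.+1 -> ordS (inord i : 'I_n.+1) = inord (next_vertex n.+1 i).
Proof. by move=> hi; apply: val_inj; rewrite /= !inordK // ltn_pmod. Qed.

Lemma adjacent_edges_inord i j : i < n.+1 -> j < n.+1 ->
  adjacent_edges (inord i : 'I_n.+1) (inord j) = adjacent n.+1 i j.
Proof. by move=> hi hj; rewrite /adjacent_edges /adjacent -!val_eqE /= !inordK. Qed.

Lemma vertex_det3_neq0 i j k : i < n.+1 -> j < n.+1 -> k < n.+1 ->
  i != j -> j != k -> i != k -> det3 (vertex i) (vertex j) (vertex k) != 0%R.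
Proof. by move=> hi hj hk ij jk ik; apply: u_gp; rewrite -val_eqE /= !inordK. Qed.

Lemma eval_orient_var i j k : i < j -> j < k -> k < n.+1 ->
  eval chirotope (orient_var n.+1 i j k) = orient (vertex i) (vertex j) (vertex k).
Proof.
move=> ij jk kn; rewrite /orient_var /= /chirotope nth_index //.
by rewrite !mem_extend_incr mem_incr_pairs /=; lia.
Qed.

Lemma eval_orient_form i j k : i < n.+1 -> j < n.+1 -> k < n.+1 ->
  i != j -> j != k -> i != k ->
  eval chirotope (orient_form n.+1 i j k) = orient (vertex i) (vertex j) (vertex k).
Proof.
move=> hi hj hk ij jk ik; have ijk := vertex_det3_neq0 hi hj hk ij jk ik.
rewrite /orient_form; case: (ltngtP i j) => [lt_ij|lt_ji|eq_ij]; last by rewrite eq_ij eqxx in ij.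
- case: (ltngtP j k) => [lt_jk|lt_kj|eq_jk]; last by rewrite eq_jk eqxx in jk.
    exact: eval_orient_var.
  case: (ltngtP i k) => [lt_ik|lt_ki|eq_ik]; last by rewrite eq_ik eqxx in ik.
    by rewrite eval_FNot eval_orient_var // orient_swapr ?negbK.
  by rewrite eval_orient_var // orient_rotr.
- case: (ltngtP i k) => [lt_ik|lt_ki|eq_ik]; last by rewrite eq_ik eqxx in ik.
    by rewrite eval_FNot eval_orient_var // orient_swapl ?negbK.
  case: (ltngtP j k) => [lt_jk|lt_kj|eq_jk]; last by rewrite eq_jk eqxx in jk.
    by rewrite eval_orient_var // orient_rotl.
  by rewrite eval_FNot eval_orient_var // orient_rev ?negbK.
Qed.

Lemma hemisphere_form_holds p q : 1 < n -> ~ in_closed_hemisphere u ->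
  p < q -> q < n.+1 -> eval chirotope (hemisphere_form n.+1 p q).
Proof.
move=> n_gt1 not_hemi pq qn.
have [r [rn rp rq]] : exists r, [/\ r < n.+1, r != p & r != q].
  by case: (eqVneq p 0) => [->|p0]; [case: (eqVneq q 1) => [->|q1]; [exists 2|exists 1]|exists 0];
    split; lia.
have pqr : det3 (vertex p) (vertex q) (vertex r) != 0%R by apply: vertex_det3_neq0; lia.
have pq0 : crossv (vertex p) (vertex q) != 0%R.
  by apply: contraNneq pqr => pq0; rewrite -dotv_crossv pq0 /dotv mul0mx mxE.
have side pos : exists2 x, x \in [seq x <- iota 0 n.+1 | x \notin [:: p; q]] &
                           eval chirotope (orient_form n.+1 p q x) = pos.
  have [i [pqi pqi0]] := not_in_hemisphere_orient pos not_hemi pq0.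
  have ip : (i : nat) != p by apply: contraNneq pqi0 => <-; rewrite vertex_ord det3_dup13.
  have iq : (i : nat) != q by apply: contraNneq pqi0 => <-; rewrite vertex_ord det3_dup23.
  exists (i : nat); first by rewrite mem_filter mem_iota !inE ltn_ord; lia.
  by rewrite eval_orient_form ?vertex_ord //; lia.
rewrite /hemisphere_form eval_FAnd !eval_orF !has_map; apply/andP; split; apply/hasP.
  by have [x x_in x_pos] := side true; exists x.
by have [x x_in x_neg] := side false; exists x; rewrite //= x_neg.
Qed.

Lemma hemisphere_forms_hold : 1 < n -> ~ in_closed_hemisphere u ->
  all (eval chirotope) (hemisphere_forms n.+1).
Proof.
move=> n_gt1 not_hemi; apply/all_allpairsP => p q; rewrite mem_above => _ /andP [pq qn].
exact: hemisphere_form_holds.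
Qed.

Lemma crossing_form_holds i j : i < n.+1 -> j < n.+1 -> ~~ adjacent n.+1 i j ->
  ~ has_self_intersection u -> ~ has_antipodal_intersection u ->
  eval chirotope (crossing_form n.+1 i j).
Proof.
move=> hi hj nadj no_self no_anti.
have nadj' := nadj; rewrite /adjacent in nadj'.
have := next_vertex_cases hi; have := next_vertex_cases hj => next_j next_i.
rewrite /crossing_form /separates eval_FNot eval_FAnd !eval_FXor !eval_orient_form; try lia.
apply/negP => /andP []; rewrite /orient -!mul_lt0E; try by apply: vertex_det3_neq0; lia.
move=> sep_i sep_j.
have [[x [e_i e_j]] | [x [e_i e_j]]] := separated_arcs_meet sep_j sep_i;
  [apply: no_self | apply: no_anti]; exists (inord i), (inord j);
  rewrite adjacent_edges_inord //; split => //; exists x; by rewrite /edge !ordS_inord.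
Qed.

Lemma crossing_forms_hold : ~ has_self_intersection u -> ~ has_antipodal_intersection u ->
  all (eval chirotope) (crossing_forms n.+1).
Proof.
move=> no_self no_anti; rewrite all_map all_filter.
apply/all_allpairsP => i j; rewrite !mem_iota => hi hj; apply/implyP => nadj.
exact: crossing_form_holds.
Qed.

Lemma plucker_form_holds a b c d e : [&& b < c, c < d, d < e & e < n.+1] ->
  a < n.+1 -> a \notin [:: b; c; d; e] -> eval chirotope (plucker_form n.+1 a b c d e).
Proof.
rewrite !inE => bcde an abcde.
rewrite /plucker_form eval_not_all_equal !eval_FNot !eval_FXor !negbK !eval_orient_form; try lia.
rewrite /orient -!mul_lt0E -?mul_gt0E; try by apply: vertex_det3_neq0; lia.
rewrite -[(_ * _ < 0)%R]oppr_gt0.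
apply: sum3_eq0_signs (det3_plucker _ _ _ _ _) _ _ _;
  rewrite ?oppr_eq0 mulf_eq0 negb_or; apply/andP; split; apply: vertex_det3_neq0; lia.
Qed.

Lemma plucker_forms_hold : all (eval chirotope) (plucker_forms n.+1).
Proof.
apply/all_allpairsP => -[[[b c] d] e] a.
rewrite !mem_extend_incr mem_incr_pairs mem_filter mem_iota.
move=> /andP [/andP [/andP [bc _] /andP [cd _]] /andP [de en]] /andP [abcde an].
by apply: plucker_form_holds; rewrite ?bc ?cd ?de.
Qed.

Lemma inflection_form_sound : 1 < n -> eval chirotope (inflection_form n.+1) ->
  forall i, inflection u i.
Proof.
move=> n_gt1; rewrite eval_andF all_map => /allP infl i.
have infl_i : eval chirotope (edge_inflection_form n.+1 i).
  by apply: infl; rewrite mem_iota add0n ltn_ord.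
have next_i := next_vertex_cases (ltn_ord i); have prev_i := prev_vertex_cases (ltn_ord i).
have /next_vertex_cases next_next_i : next_vertex n.+1 i < n.+1 by lia.
rewrite /edge_inflection_form eval_FXor !eval_orient_form in infl_i; try lia.
rewrite /inflection -!vertex_ord !val_ordS val_ord_pred opposite_signsE //;
  apply: vertex_det3_neq0; lia.
Qed.

End PolygonChirotope.

Theorem proposition4 (R : realType) (u : 'I_6 -> 'rV[R]_3) :
  sphere_polygon u ->
  general_position u ->
  ~ in_closed_hemisphere u ->
  ~ has_self_intersection u ->
  ~ has_antipodal_intersection u ->
  num_inflections u = 6%N.
Proof.
(* Only signs of determinants matter, so the vertices need not be unit vectors. *)
move=> _ gp not_hemi no_self no_anti.
have := @refutes_mkseq _ _ (chirotope u) 0 hexagon_forms_refuted.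
rewrite (all_cat _ (hemisphere_forms 6)) (all_cat _ (crossing_forms 6)).
rewrite (all_cat _ (plucker_forms 6)) (hemisphere_forms_hold gp) // (crossing_forms_hold gp) //.
rewrite (plucker_forms_hold gp) all_seq1 eval_FNot negbK => /(inflection_form_sound gp) all_infl.
rewrite /num_inflections (_ : [set i | inflection u i] = setT) ?cardsT ?card_ord //.
by apply/setP => i; rewrite !inE all_infl.
Qed.
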